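(* Let $M\ge2$ and $N\ge2$ be integers. The $N^M$ standard oracle operators $U_f$, where $f$ ranges over all functions $\mathbb{Z}_M\to\mathbb{Z}_N$, are not unambiguously distinguishable.
   Context: Let $\mathcal{H}_M,\mathcal{H}_N$ be Hilbert spaces with orthonormal computational bases $\{|x\rangle\}_{x\in\mathbb{Z}_M}$, $\{|y\rangle\}_{y\in\mathbb{Z}_N}$. For $f:\mathbb{Z}_M\to\mathbb{Z}_N$ the standard oracle operator is the unitary $U_f$ on $\mathcal{H}_M\otimes\mathcal{H}_N$ with $U_f|x\rangle\otimes|y\rangle=|x\rangle\otimes|y\oplus f(x)\rangle$, $\oplus$ being addition mod $N$. A finite list of unitary operators $W_1,\ldots,W_K$ on a finite-dimensional Hilbert space $\mathcal{H}$ is called unambiguously distinguishable if there exist a finite-dimensional ancilla space $\mathcal{H}_A$ and a unit vector $|\psi\rangle\in\mathcal{H}\otimes\mathcal{H}_A$ such that the vectors $(W_j\otimes\mathbb{1}_A)|\psi\rangle$ are linearly independent. *)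

(* Scalars: an arbitrary numClosedFieldType C (e.g. complex R
   for a real-closed/real field R, or algC); finite-dimensional Hilbert spaces
   are C^T for a finite basis type T. *)
From HB Require Import structures.
From mathcomp Require Import all_boot all_order all_algebra.
Set Implicit Arguments. Unset Strict Implicit. Unset Printing Implicit Defensive.
Import Order.TTheory GRing.Theory Num.Theory.
Local Open Scope ring_scope.

Section Defs.
Variable C : numClosedFieldType.

Definition oplus (N : nat) (y z : 'I_N) : 'I_N :=
  Ordinal (ltn_pmod (y + z) (leq_ltn_trans (leq0n y) (ltn_ord y))).

Definition lin_indep (I T : finType) (v : I -> T -> C) : Prop :=
  forall c : I -> C, (forall t, \sum_(i : I) c i * v i t = 0) -> forall i, c i = 0.

Definition unit_vec (T : finType) (psi : T -> C) : Prop :=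
  \sum_(t : T) psi t * (psi t)^* = 1.

(* (W (x) 1_A) psi, W an operator on C^T given by its matrix W t s = <t|W|s> *)
Definition apply_tensor_id (T A : finType) (W : T -> T -> C) (psi : T * A -> C)
  : T * A -> C :=
  fun p => \sum_(s : T) W p.1 s * psi (s, p.2).

Definition unamb_dist (I T : finType) (W : I -> T -> T -> C) : Prop :=
  exists d : nat, exists psi : T * 'I_d -> C,
    unit_vec psi /\ lin_indep (fun i => apply_tensor_id (W i) psi).

(* standard oracle U_f |x>|y> = |x>|y (+) f(x)>, as a matrix on basis Z_M x Z_N *)
Definition oracle (M N : nat) (f : {ffun 'I_M -> 'I_N})
  : 'I_M * 'I_N -> 'I_M * 'I_N -> C :=
  fun p q => if (p.1 == q.1) && (p.2 == oplus q.2 (f q.1)) then 1 else 0.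

End Defs.

(* The oracle U_f acts on |x>|y> through f(x) alone, so exchanging the values
   of two functions at some points does not change U_f + U_g.  With x0 != x1
   and a0 != a1, the functions constant a0, constant a1, "a0 at x0, else a1"
   and "a1 at x0, else a0" thus satisfy U_00 + U_11 = U_01 + U_10.  A linear
   relation between the operators transfers to their images of any |psi>, so
   these images can never be linearly independent. *)
From HB Require Import structures.
From mathcomp Require Import all_boot all_order all_algebra.
Import Order.TTheory GRing.Theory Num.Theory.
Local Open Scope ring_scope.

Section LinearDependence.
Variable C : numClosedFieldType.

Lemma unamb_dist_lin_indep (I T : finType) (W : I -> T -> T -> C) :
  unamb_dist W -> lin_indep (fun i (p : T * T) => W i p.1 p.2).
Proof.
move=> [d [psi [_ indep]]] c c_rel; apply: indep => p.
rewrite /apply_tensor_id; under eq_bigr do rewrite mulr_sumr.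
rewrite exchange_big; apply: big1 => s _.
by under eq_bigr do rewrite mulrA; rewrite -mulr_suml (c_rel (p.1, s)) mul0r.
Qed.

Lemma sum_indicator (I : finType) (a : I) (F : I -> C) :
  \sum_i (i == a)%:R * F i = F a.
Proof.
by under eq_bigr do rewrite mulr_natl mulrb; rewrite -big_mkcond big_pred1_eq.
Qed.

Lemma not_lin_indep_addr (I T : finType) (v : I -> T -> C) (a b c d : I) :
  a != c -> a != d -> (forall t, v a t + v b t = v c t + v d t) ->
  ~ lin_indep v.
Proof.
move=> ac ad v_rel indep.
pose k i : C := (i == a)%:R + (i == b)%:R - (i == c)%:R - (i == d)%:R.
have k_rel t : \sum_i k i * v i t = 0.
  under eq_bigr do rewrite !mulrBl mulrDl.
  by rewrite !sumrB big_split /= !sum_indicator v_rel addrAC addrK subrr.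
(* k a = 1 + (a == b)%:R, nonzero in characteristic 0 even when a = b. *)
have /eqP := indep k k_rel a.
by rewrite /k eqxx (negbTE ac) (negbTE ad) !subr0 addrC natr1 pnatr_eq0.
Qed.

End LinearDependence.

Lemma oracleD_exchange (C : numClosedFieldType) (M N : nat)
    (f g h k : {ffun 'I_M -> 'I_N}) :
  (forall x, f x = h x /\ g x = k x \/ f x = k x /\ g x = h x) ->
  forall p q, oracle C f p q + oracle C g p q = oracle C h p q + oracle C k p q.
Proof.
move=> fg_hk p q; rewrite /oracle.
by case: (fg_hk q.1) => -[-> ->] //; rewrite addrC.
Qed.

Theorem theorem4 (C : numClosedFieldType) (M N : nat) :
  (2 <= M)%N -> (2 <= N)%N ->
  ~ unamb_dist (fun f : {ffun 'I_M -> 'I_N} => oracle C f).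
Proof.
move=> M_ge2 N_ge2 /unamb_dist_lin_indep.
pose x0 : 'I_M := Ordinal (ltnW M_ge2); pose x1 : 'I_M := Ordinal M_ge2.
pose a0 : 'I_N := Ordinal (ltnW N_ge2); pose a1 : 'I_N := Ordinal N_ge2.
pose g i j : {ffun 'I_M -> 'I_N} := [ffun x => if x == x0 then i else j].
apply: (not_lin_indep_addr _ _ _ _ (g a0 a0) (g a1 a1) (g a0 a1) (g a1 a0)).
- by apply/eqP => /ffunP/(_ x1); rewrite !ffunE.
- by apply/eqP => /ffunP/(_ x0); rewrite !ffunE eqxx.
- move=> [p q]; apply: oracleD_exchange => x; rewrite !ffunE.
  by case: (x == x0); [left | right].
Qed.
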